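(* (i) Let $H_0 \subset \mathbb{S}^n$ be a hemisphere. Any family $(H_i)_{i \in I}$ of hemispheres such that the sets $H_0 \cap H_i$, $i\in I$, are non-empty and pairwise disjoint has cardinality at most $2$. (ii) Let $\min(p,q)\ge 2$ and let $M_0 \subset \widetilde{\mathrm{Ein}}^{p,q}$ be a Minkowski patch. Any family $(M_i)_{i\in I}$ of Minkowski patches such that the sets $M_0 \cap M_i$, $i \in I$, are non-empty and pairwise disjoint has cardinality at most $2$.
   Context: A hemisphere of $\mathbb{S}^n\subset\mathbb{R}^{n+1}$ is $\mathbb{S}^n\cap\{\ell>0\}$ for a nonzero linear form $\ell$. $\widetilde{\mathrm{Ein}}^{p,q}\cong\mathbb{S}^p\times\mathbb{S}^q$ is the set of isotropic vectors of Euclidean norm 1 of $\mathbb{R}^{p+1,q+1}$, double covering $\mathrm{Ein}^{p,q}$ (isotropic lines) via $\pi_{\mathbf{X}}$. A Minkowski patch of $\widetilde{\mathrm{Ein}}^{p,q}$ is a connected component of $\pi_{\mathbf{X}}^{-1}(M_x)$ with $M_x=\{[w]:B(v,w)\ne 0\}$ for an isotropic $v$, $x=[v]$. *)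

(* classical reals.  Vectors of R^(N+1) are functions
   nat -> R supported on indices 0..N. Sets are predicates. *)
From Stdlib Require Import Reals.
Open Scope R_scope.

Definition vecR := nat -> R.
Definition pset := vecR -> Prop.

Definition supp (N : nat) (x : vecR) : Prop := forall i, (N < i)%nat -> x i = 0.

Definition dot (N : nat) (x y : vecR) : R := sum_f_R0 (fun i => x i * y i) N.

Definition vsub (x y : vecR) : vecR := fun i => x i - y i.

Definition nonzero (N : nat) (x : vecR) : Prop := exists i, (i <= N)%nat /\ x i <> 0.

Definition sphere (n : nat) : pset := fun x => supp n x /\ dot n x x = 1.

(* H is S^n ∩ {l > 0} for a nonzero linear form l (written l = <lv, .>) *)
Definition hemisphere (n : nat) (H : pset) : Prop :=
  exists lv : vecR, supp n lv /\ nonzero n lv /\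
    forall x, H x <-> (sphere n x /\ dot n lv x > 0).

(* ---------- Part (ii): R^{p+1,q+1}, coordinates 0..p positive,
   p+1..p+q+1 negative (total p+q+2 coordinates) ---------- *)
Definition Bform (p q : nat) (v w : vecR) : R :=
  sum_f_R0 (fun i => v i * w i) p
  - sum_f_R0 (fun i => v (S p + i)%nat * w (S p + i)%nat) q.

Definition Ein_tilde (p q : nat) : pset :=
  fun w => supp (p + q + 1) w /\ Bform p q w w = 0 /\ dot (p + q + 1) w w = 1.

Definition rel_open (N : nat) (S U : pset) : Prop :=
  (forall x, U x -> S x) /\
  forall a, U a -> exists eps, eps > 0 /\
    forall b, S b -> dot N (vsub a b) (vsub a b) < eps -> U b.

Definition connected (N : nat) (C : pset) : Prop :=
  forall U V : pset, rel_open N C U -> rel_open N C V ->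
    (forall x, C x -> U x \/ V x) -> (forall x, ~ (U x /\ V x)) ->
    (forall x, ~ U x) \/ (forall x, ~ V x).

Definition conn_component (N : nat) (S C : pset) : Prop :=
  (exists x, C x) /\ (forall x, C x -> S x) /\ connected N C /\
  forall D : pset, (forall x, C x -> D x) -> (forall x, D x -> S x) ->
    connected N D -> forall x, D x -> C x.

(* Minkowski patch: connected component of pi^{-1}(M_x), x = [v], v isotropic *)
Definition minkowski_patch (p q : nat) (M : pset) : Prop :=
  exists v : vecR, supp (p + q + 1) v /\ nonzero (p + q + 1) v /\ Bform p q v v = 0 /\
    conn_component (p + q + 1)
      (fun w => Ein_tilde p q w /\ Bform p q v w <> 0) M.

Definition at_most_two (I : Type) : Prop := forall i j k : I, i = j \/ i = k \/ j = k.

(* Hemispheres are the traces on S^n of open half-spaces {<u, .> > 0} of R^(n+1), and so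
   are Minkowski patches on Ein~^{p,q}: the complement of the hyperplane B(v, .) = 0 splits
   into the halves B(v, .) > 0 and B(v, .) < 0, each of which is path-connected (a point is
   moved one block of coordinates at a time, along great circles, to a multiple of the dual
   of v without decreasing B(v, .)), so a connected component is one of the two halves.

   Both S^n and, for p, q >= 2, Ein~^{p,q} meet every nonempty open cone
   {<a, .> > 0, <b, .> > 0, <c, .> > 0}: normalize a point of the cone, after first moving
   it, in the case of Ein~, along a direction of a three-dimensional block that is
   nonnegative for a, b, c until B vanishes on it. This reduces the statement to linear
   algebra: if {u_i > 0} meets {u_0 > 0} for i = 1, 2, 3, two of them meet inside {u_0 > 0}.
   Let g_i be the projection of u_i onto u_0^⊥. If neither {u_1 > 0, u_2 > 0} nor
   {u_1 > 0, u_3 > 0} meets {u_0 > 0}, then <g_1, g_2> < 0 and <g_1, g_3> < 0, and a point of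
   {u_0 > 0, u_2 > 0} pushed far in the direction -g_1 also lies in {u_3 > 0}. *)

From Pilot Require Import Defs.
From Stdlib Require Import Reals Lra Lia Psatz Classical FunctionalExtensionality Relations.
Open Scope R_scope.

Definition bdot (m n : nat) (v w : vecR) : R :=
  sum_f_R0 (fun i => v (m + i)%nat * w (m + i)%nat) n.

Definition vadd (x y : vecR) : vecR := fun i => x i + y i.

Definition vscal (c : R) (x : vecR) : vecR := fun i => c * x i.

Lemma vadd_comm x y : vadd x y = vadd y x.
Proof. apply functional_extensionality; intros i; unfold vadd; ring. Qed.

Lemma bdot_sym m n v w : bdot m n v w = bdot m n w v.
Proof. apply sum_eq; intros; ring. Qed.

Lemma bdot_addr m n v w1 w2 : bdot m n v (vadd w1 w2) = bdot m n v w1 + bdot m n v w2.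
Proof. unfold bdot, vadd; induction n as [|n IH]; simpl; [|rewrite IH]; ring. Qed.

Lemma bdot_scalr m n v c w : bdot m n v (vscal c w) = c * bdot m n v w.
Proof. unfold bdot, vscal; induction n as [|n IH]; simpl; [|rewrite IH]; ring. Qed.

Lemma bdot_addl m n v1 v2 w : bdot m n (vadd v1 v2) w = bdot m n v1 w + bdot m n v2 w.
Proof. rewrite !(bdot_sym m n _ w); apply bdot_addr. Qed.

Lemma bdot_scall m n c v w : bdot m n (vscal c v) w = c * bdot m n v w.
Proof. rewrite !(bdot_sym m n _ w); apply bdot_scalr. Qed.

Lemma bdot_ge0 m n v : 0 <= bdot m n v v.
Proof. unfold bdot; induction n; simpl; nra. Qed.

Lemma discriminant_le a b c :
  0 <= c -> (forall t, 0 <= a + 2 * b * t + c * t * t) -> b * b <= a * c.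
Proof.
  intros Hc H.
  destruct (Req_dec c 0) as [->|Hc0].
  - destruct (Req_dec b 0) as [->|Hb]; [lra|].
    specialize (H (- (a + 1) / (2 * b))).
    replace (a + 2 * b * (- (a + 1) / (2 * b)) + 0 * (- (a + 1) / (2 * b)) * (- (a + 1) / (2 * b)))
      with (-1) in H by (field; exact Hb). lra.
  - specialize (H (- b / c)).
    replace (a + 2 * b * (- b / c) + c * (- b / c) * (- b / c)) with ((a * c - b * b) / c) in H
      by (field; lra).
    apply Rmult_le_compat_r with (r := c) in H; [|lra].
    unfold Rdiv in H; rewrite Rmult_0_l, Rmult_assoc, Rinv_l, Rmult_1_r in H; lra.
Qed.

Lemma bdot_cauchy_schwarz m n v w : bdot m n v w * bdot m n v w <= bdot m n v v * bdot m n w w.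
Proof.
  apply discriminant_le; [apply bdot_ge0|]. intros t.
  pose proof (bdot_ge0 m n (vadd v (vscal t w))) as H.
  rewrite bdot_addl, !bdot_addr, !bdot_scall, !bdot_scalr, (bdot_sym m n w v) in H. lra.
Qed.

Lemma bdot_null_r m n v w : bdot m n v v = 0 -> bdot m n v w = 0.
Proof. intros H. pose proof (bdot_cauchy_schwarz m n v w). rewrite H in H0. nra. Qed.

Lemma bdot_self_gt0 m n v w : bdot m n v w <> 0 -> 0 < bdot m n w w.
Proof.
  intros H. destruct (Rle_lt_or_eq_dec _ _ (bdot_ge0 m n w)) as [|E]; [assumption|].
  exfalso; apply H; rewrite bdot_sym; apply bdot_null_r; auto.
Qed.

Lemma bdot_subr m n u a b : bdot m n u (vsub a b) = bdot m n u a - bdot m n u b.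
Proof. unfold bdot, vsub; induction n as [|n IH]; simpl; [|rewrite IH]; ring. Qed.

Lemma bdot_split p q v w : bdot 0 (p + q + 1) v w = bdot 0 p v w + bdot (S p) q v w.
Proof.
  unfold bdot at 1. rewrite (tech2 _ p (p + q + 1)) by lia.
  replace (p + q + 1 - S p)%nat with q by lia. reflexivity.
Qed.

Lemma Bform_blocks p q v w : Bform p q v w = bdot 0 p v w - bdot (S p) q v w.
Proof. reflexivity. Qed.

Lemma supp_vscal N c z : supp N z -> supp N (vscal c z).
Proof. intros H i Hi; unfold vscal; rewrite H by lia; ring. Qed.

Lemma supp_vadd N x y : supp N x -> supp N y -> supp N (vadd x y).
Proof. intros H1 H2 i Hi; unfold vadd; rewrite H1, H2 by lia; ring. Qed.

Definition trunc (N : nat) (z : vecR) : vecR := fun i => if (i <=? N)%nat then z i else 0.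

Lemma supp_trunc N z : supp N (trunc N z).
Proof. intros i Hi; unfold trunc; destruct (Nat.leb_spec i N); [lia|reflexivity]. Qed.

Lemma bdot_trunc_r N u z : bdot 0 N u (trunc N z) = bdot 0 N u z.
Proof.
  apply sum_eq; intros i Hi; unfold trunc; simpl.
  destruct (Nat.leb_spec i N); [reflexivity|lia].
Qed.

Lemma bdot_self_ge_coord m n v i : (i <= n)%nat -> v (m + i)%nat * v (m + i)%nat <= bdot m n v v.
Proof.
  intros Hi. induction n as [|n IH]; unfold bdot in *; simpl.
  - replace i with 0%nat by lia. lra.
  - destruct (Nat.eq_dec i (S n)) as [->|Hne].
    + pose proof (bdot_ge0 m n v). unfold bdot in H. nra.
    + specialize (IH ltac:(lia)). nra.
Qed.

Lemma bdot_nonzero_pos N v : Defs.nonzero N v -> 0 < bdot 0 N v v.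
Proof.
  intros [i [Hi Hv]]. eapply Rlt_le_trans; [|apply (bdot_self_ge_coord 0 N v i Hi)].
  apply Rsqr_pos_lt, Hv.
Qed.

Lemma normalize_vector N z :
  supp N z -> 0 < bdot 0 N z z ->
  exists c, 0 < c /\ supp N (vscal c z) /\ bdot 0 N (vscal c z) (vscal c z) = 1.
Proof.
  intros Hs Hp. pose proof (sqrt_lt_R0 _ Hp) as Hr.
  exists (/ sqrt (bdot 0 N z z)). split; [apply Rinv_0_lt_compat; lra|].
  split; [apply supp_vscal, Hs|].
  rewrite bdot_scall, bdot_scalr, <- Rmult_assoc, <- Rinv_mult, sqrt_sqrt by lra.
  field; lra.
Qed.

(** * Three half-spaces meeting a fourth *)

Definition halfspaces_meet (N : nat) (a b c : vecR) : Prop :=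
  exists z, bdot 0 N a z > 0 /\ bdot 0 N b z > 0 /\ bdot 0 N c z > 0.

Lemma halfspaces_meet_swap N a b c : halfspaces_meet N a b c -> halfspaces_meet N a c b.
Proof. intros [z Hz]; exists z; tauto. Qed.

Lemma halfspaces_meet_of_direction N a b c z e :
  bdot 0 N a z > 0 -> bdot 0 N b z > 0 ->
  bdot 0 N a e = 0 -> 0 <= bdot 0 N b e -> 0 < bdot 0 N c e ->
  halfspaces_meet N a b c.
Proof.
  intros Haz Hbz Hae Hbe Hce.
  set (t := (Rabs (bdot 0 N c z) + 1) / bdot 0 N c e).
  assert (Ht : 0 < t) by (apply Rdiv_lt_0_compat; [pose proof (Rabs_pos (bdot 0 N c z))|]; lra).
  assert (Htc : t * bdot 0 N c e = Rabs (bdot 0 N c z) + 1) by (unfold t; field; lra).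
  exists (vadd z (vscal t e)); rewrite !bdot_addr, !bdot_scalr.
  pose proof (Rle_abs (- bdot 0 N c z)); rewrite Rabs_Ropp in *. repeat split; nra.
Qed.

(* [|u0|^2] times the orthogonal projection of [u] onto [u0^⊥]. *)
Definition hyperplane_proj (N : nat) (u0 u : vecR) : vecR :=
  vadd (vscal (bdot 0 N u0 u0) u) (vscal (- bdot 0 N u u0) u0).

Section FourHalfspaces.

Variables (N : nat) (u0 : vecR).
Let proj := hyperplane_proj N u0.

Lemma bdot_hyperplane_proj u : bdot 0 N u0 (proj u) = 0.
Proof.
  unfold proj, hyperplane_proj; rewrite bdot_addr, !bdot_scalr, (bdot_sym 0 N u0 u); ring.
Qed.

Lemma bdot_hyperplane_proj_orth u e :
  bdot 0 N u0 e = 0 -> bdot 0 N (proj u) e = bdot 0 N u0 u0 * bdot 0 N u e.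
Proof. intros He; unfold proj, hyperplane_proj; rewrite bdot_addl, !bdot_scall, He; ring. Qed.

Hypothesis u0_nonnull : 0 < bdot 0 N u0 u0.

Lemma hyperplane_proj_nonnull ui uj :
  halfspaces_meet N u0 ui ui -> halfspaces_meet N u0 uj uj ->
  ~ halfspaces_meet N u0 ui uj -> 0 < bdot 0 N (proj ui) (proj ui).
Proof.
  intros [zi [Hi0 [Hi _]]] [zj [Hj0 [Hj _]]] Hn.
  destruct (Rle_lt_or_eq_dec _ _ (bdot_ge0 0 N (proj ui))) as [|Hnull]; [assumption|].
  exfalso; apply Hn.
  assert (Hui : forall w, bdot 0 N u0 u0 * bdot 0 N ui w = bdot 0 N ui u0 * bdot 0 N u0 w).
  { intros w. pose proof (bdot_null_r 0 N (proj ui) w (eq_sym Hnull)) as H.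
    unfold proj, hyperplane_proj in H; rewrite bdot_addl, !bdot_scall in H; lra. }
  assert (Hc : 0 < bdot 0 N ui u0) by (pose proof (Hui zi); nra).
  exists zj; pose proof (Hui zj); repeat split; nra.
Qed.

Lemma hyperplane_proj_cross_neg ui uj :
  halfspaces_meet N u0 ui ui -> 0 < bdot 0 N (proj ui) (proj ui) ->
  0 < bdot 0 N (proj uj) (proj uj) ->
  ~ halfspaces_meet N u0 ui uj -> bdot 0 N (proj ui) (proj uj) < 0.
Proof.
  intros [zi [Hi0 [Hi _]]] Pi Pj Hn.
  destruct (Rlt_le_dec (bdot 0 N (proj ui) (proj uj)) 0) as [|Hge]; [assumption|].
  exfalso; apply Hn.
  set (e := vadd (proj ui) (proj uj)).
  assert (He : bdot 0 N u0 e = 0) by (unfold e; rewrite bdot_addr, !bdot_hyperplane_proj; ring).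
  assert (Hie : bdot 0 N u0 u0 * bdot 0 N ui e =
                bdot 0 N (proj ui) (proj ui) + bdot 0 N (proj ui) (proj uj))
    by (rewrite <- bdot_hyperplane_proj_orth by exact He; unfold e; apply bdot_addr).
  assert (Hje : bdot 0 N u0 u0 * bdot 0 N uj e =
                bdot 0 N (proj ui) (proj uj) + bdot 0 N (proj uj) (proj uj))
    by (rewrite <- bdot_hyperplane_proj_orth by exact He; unfold e;
        rewrite bdot_addr, (bdot_sym 0 N (proj uj) (proj ui)); reflexivity).
  apply (halfspaces_meet_of_direction N u0 ui uj zi e); try assumption; nra.
Qed.

End FourHalfspaces.

Theorem halfspaces_meet_two_of_three N u0 u1 u2 u3 :
  halfspaces_meet N u0 u1 u1 -> halfspaces_meet N u0 u2 u2 -> halfspaces_meet N u0 u3 u3 ->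
  halfspaces_meet N u0 u1 u2 \/ halfspaces_meet N u0 u1 u3 \/ halfspaces_meet N u0 u2 u3.
Proof.
  intros H1 H2 H3. apply NNPP; intros Hn.
  assert (N12 : ~ halfspaces_meet N u0 u1 u2) by tauto.
  assert (N13 : ~ halfspaces_meet N u0 u1 u3) by tauto.
  assert (N23 : ~ halfspaces_meet N u0 u2 u3) by tauto.
  assert (Ha0 : 0 < bdot 0 N u0 u0).
  { destruct H1 as [z [Hz _]]. apply (bdot_self_gt0 0 N z); rewrite bdot_sym; lra. }
  pose proof (hyperplane_proj_nonnull N u0 Ha0 u1 u2 H1 H2 N12) as P1.
  pose proof (hyperplane_proj_nonnull N u0 Ha0 u2 u1 H2 H1
                (fun H => N12 (halfspaces_meet_swap _ _ _ _ H))) as P2.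
  pose proof (hyperplane_proj_nonnull N u0 Ha0 u3 u1 H3 H1
                (fun H => N13 (halfspaces_meet_swap _ _ _ _ H))) as P3.
  pose proof (hyperplane_proj_cross_neg N u0 Ha0 u1 u2 H1 P1 P2 N12) as C12.
  pose proof (hyperplane_proj_cross_neg N u0 Ha0 u1 u3 H1 P1 P3 N13) as C13.
  apply N23. destruct H2 as [z2 [H02 [H22 _]]].
  set (e := vscal (-1) (hyperplane_proj N u0 u1)).
  assert (He : bdot 0 N u0 e = 0) by (unfold e; rewrite bdot_scalr, bdot_hyperplane_proj; ring).
  assert (Hk : forall u, bdot 0 N u0 u0 * bdot 0 N u e =
                 - bdot 0 N (hyperplane_proj N u0 u1) (hyperplane_proj N u0 u)).
  { intros u. rewrite <- bdot_hyperplane_proj_orth by exact He. unfold e.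
    rewrite bdot_scalr, bdot_sym. ring. }
  pose proof (Hk u2); pose proof (Hk u3).
  apply (halfspaces_meet_of_direction N u0 u2 u3 z2 e); try assumption; nra.
Qed.

(** * Traces of half-spaces *)

Definition halfset (N : nat) (A : pset) (u : vecR) : pset :=
  fun x => A x /\ bdot 0 N u x > 0.

Definition halfspace_trace (N : nat) (A S : pset) : Prop :=
  exists u, forall x, S x <-> halfset N A u x.

Definition meets_cones (N : nat) (A : pset) : Prop :=
  forall a b c, halfspaces_meet N a b c ->
    exists x, A x /\ bdot 0 N a x > 0 /\ bdot 0 N b x > 0 /\ bdot 0 N c x > 0.

Theorem at_most_two_halfspace_traces N A (S0 : pset) I (S : I -> pset) :
  meets_cones N A -> halfspace_trace N A S0 -> (forall i, halfspace_trace N A (S i)) ->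
  (forall i, exists x, S0 x /\ S i x) ->
  (forall i j, i <> j -> forall x, ~ (S0 x /\ S i x /\ S j x)) ->
  at_most_two I.
Proof.
  intros Hcones [u0 E0] Htr Hne Hdis i j k.
  destruct (Htr i) as [ui Ei], (Htr j) as [uj Ej], (Htr k) as [uk Ek].
  assert (Hpair : forall a ua, (forall x, S a x <-> halfset N A ua x) ->
                   halfspaces_meet N u0 ua ua).
  { intros a ua Ea. destruct (Hne a) as [x [X0 Xa]].
    apply E0 in X0; apply Ea in Xa. exists x; unfold halfset in *; tauto. }
  assert (Hsep : forall a b ua ub, a <> b -> (forall x, S a x <-> halfset N A ua x) ->
            (forall x, S b x <-> halfset N A ub x) -> ~ halfspaces_meet N u0 ua ub).
  { intros a b ua ub Hab Ea Eb Hm.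
    destruct (Hcones _ _ _ Hm) as [x [Ax [X0 [Xa Xb]]]].
    apply (Hdis a b Hab x). rewrite E0, Ea, Eb. unfold halfset; tauto. }
  destruct (classic (i = j)) as [|Hij]; [now left|].
  destruct (classic (i = k)) as [|Hik]; [now right; left|].
  destruct (classic (j = k)) as [|Hjk]; [now right; right|].
  exfalso.
  destruct (halfspaces_meet_two_of_three N u0 ui uj uk
              (Hpair i ui Ei) (Hpair j uj Ej) (Hpair k uk Ek))
    as [H|[H|H]].
  - exact (Hsep i j ui uj Hij Ei Ej H).
  - exact (Hsep i k ui uk Hik Ei Ek H).
  - exact (Hsep j k uj uk Hjk Ej Ek H).
Qed.

Lemma sphere_meets_cones n : meets_cones n (sphere n).
Proof.
  intros a b c [z [Ha [Hb Hc]]].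
  set (z' := trunc n z).
  assert (Hz' : 0 < bdot 0 n z' z')
    by (apply (bdot_self_gt0 0 n a); unfold z'; rewrite bdot_trunc_r; lra).
  destruct (normalize_vector n z' (supp_trunc n z) Hz') as [s [Hs [Hsupp Hnorm]]].
  exists (vscal s z'). unfold z'; rewrite !bdot_scalr, !bdot_trunc_r.
  repeat split; try assumption; apply Rmult_gt_0_compat; lra.
Qed.

Lemma hemisphere_trace n H : hemisphere n H -> halfspace_trace n (sphere n) H.
Proof. intros [lv [_ [_ Hx]]]. exists lv. exact Hx. Qed.

(** * Open cones meet Ein~ *)

Lemma common_kernel3 a1 a2 a3 b1 b2 b3 : exists x1 x2 x3,
  0 < x1 * x1 + x2 * x2 + x3 * x3 /\
  a1 * x1 + a2 * x2 + a3 * x3 = 0 /\ b1 * x1 + b2 * x2 + b3 * x3 = 0.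
Proof.
  set (c1 := a2 * b3 - a3 * b2). set (c2 := a3 * b1 - a1 * b3). set (c3 := a1 * b2 - a2 * b1).
  destruct (Rlt_dec 0 (c1 * c1 + c2 * c2 + c3 * c3)) as [Hc|Hc].
  { exists c1, c2, c3. unfold c1, c2, c3 in *. split; [exact Hc|split; ring]. }
  assert (Hc1 : c1 = 0) by nra. assert (Hc2 : c2 = 0) by nra. assert (Hc3 : c3 = 0) by nra.
  destruct (Rlt_dec 0 (a2 * a2 + a3 * a3)) as [Ha|Ha].
  { exists 0, a3, (- a2). unfold c1 in Hc1. repeat split; nra. }
  assert (a2 = 0) by nra. assert (a3 = 0) by nra. subst a2 a3.
  destruct (Req_dec b3 0) as [Hb3|Hb3].
  { exists 0, 0, 1. subst b3. repeat split; lra. }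
  exists 0, b3, (- b2). repeat split; nra.
Qed.

Lemma nonneg_direction3 a1 a2 a3 b1 b2 b3 c1 c2 c3 : exists x1 x2 x3,
  0 < x1 * x1 + x2 * x2 + x3 * x3 /\
  0 <= a1 * x1 + a2 * x2 + a3 * x3 /\ 0 <= b1 * x1 + b2 * x2 + b3 * x3 /\
  0 <= c1 * x1 + c2 * x2 + c3 * x3.
Proof.
  destruct (common_kernel3 a1 a2 a3 b1 b2 b3) as [x1 [x2 [x3 [Hx [Ha Hb]]]]].
  destruct (Rle_dec 0 (c1 * x1 + c2 * x2 + c3 * x3)).
  - exists x1, x2, x3. repeat split; lra.
  - exists (- x1), (- x2), (- x3). repeat split; nra.
Qed.

Lemma quadratic_root_nonneg_pos A B C :
  0 < A -> C <= 0 -> exists t, 0 <= t /\ A * t * t + 2 * B * t + C = 0.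
Proof.
  intros HA HC.
  assert (Hd : 0 <= B * B - A * C) by nra.
  pose proof (sqrt_pos (B * B - A * C)) as Hs.
  pose proof (sqrt_sqrt (B * B - A * C) Hd) as Hss.
  assert (HB : B <= sqrt (B * B - A * C)).
  { destruct (Rle_dec B 0); [lra|]. apply Rsqr_incr_0_var; unfold Rsqr; nra. }
  exists ((- B + sqrt (B * B - A * C)) / A). split.
  - apply Rmult_le_pos; [lra|left; apply Rinv_0_lt_compat; lra].
  - set (r := sqrt (B * B - A * C)) in *. field_simplify; [|lra].
    replace (r ^ 2) with (B * B - A * C) by (rewrite <- Hss; ring). field; lra.
Qed.

Lemma quadratic_root_nonneg A B C :
  A <> 0 -> A * C <= 0 -> exists t, 0 <= t /\ A * t * t + 2 * B * t + C = 0.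
Proof.
  intros HA HAC. destruct (Rlt_dec 0 A) as [Hp|Hn].
  - apply quadratic_root_nonneg_pos; nra.
  - destruct (quadratic_root_nonneg_pos (- A) (- B) (- C)) as [t [Ht Et]]; [lra|nra|].
    exists t; split; [exact Ht|lra].
Qed.

Definition vec3 (m : nat) (x0 x1 x2 : R) : vecR :=
  fun i => if (i =? m)%nat then x0 else if (i =? S m)%nat then x1
           else if (i =? S (S m))%nat then x2 else 0.

Lemma vec3_shift m x0 x1 x2 k :
  vec3 m x0 x1 x2 (m + k)%nat = match k with 0 => x0 | 1 => x1 | 2 => x2 | _ => 0 end.
Proof.
  unfold vec3.
  destruct (Nat.eqb_spec (m + k) m), (Nat.eqb_spec (m + k) (S m)),
    (Nat.eqb_spec (m + k) (S (S m))); destruct k as [|[|[|k]]]; lia || reflexivity.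
Qed.

Lemma vec3_out m x0 x1 x2 i : (i < m \/ S (S m) < i)%nat -> vec3 m x0 x1 x2 i = 0.
Proof.
  intros H; unfold vec3.
  destruct (Nat.eqb_spec i m), (Nat.eqb_spec i (S m)), (Nat.eqb_spec i (S (S m)));
    lia || reflexivity.
Qed.

Lemma supp_vec3 N m x0 x1 x2 : (S (S m) <= N)%nat -> supp N (vec3 m x0 x1 x2).
Proof. intros Hm i Hi; apply vec3_out; lia. Qed.

Lemma bdot_vec3_in m n c x0 x1 x2 :
  (2 <= n)%nat -> bdot m n c (vec3 m x0 x1 x2) = c m * x0 + c (S m) * x1 + c (S (S m)) * x2.
Proof.
  intros Hn. unfold bdot.
  rewrite (sum_eq _
             (fun i => c (m + i)%nat * match i with 0 => x0 | 1 => x1 | 2 => x2 | _ => 0 end))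
    by (intros i _; rewrite vec3_shift; reflexivity).
  destruct (Nat.eq_dec n 2) as [->|Hn2].
  - simpl. rewrite Nat.add_0_r, <- !plus_n_Sm, Nat.add_0_r. ring.
  - rewrite (tech2 _ 2 n), (sum_eq_R0 _ (n - 3)) by (lia || (intros; simpl; ring)).
    simpl. rewrite Nat.add_0_r, <- !plus_n_Sm, Nat.add_0_r. ring.
Qed.

Lemma bdot_vec3_out k n m c x0 x1 x2 :
  (k + n < m \/ S (S m) < k)%nat -> bdot k n c (vec3 m x0 x1 x2) = 0.
Proof. intros H. apply sum_eq_R0. intros i Hi. rewrite vec3_out by lia. ring. Qed.

Lemma Bform_expand p q z d t :
  Bform p q (vadd z (vscal t d)) (vadd z (vscal t d)) =
  Bform p q d d * t * t + 2 * Bform p q z d * t + Bform p q z z.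
Proof.
  rewrite !Bform_blocks, !bdot_addl, !bdot_addr, !bdot_scall, !bdot_scalr,
    (bdot_sym 0 p d z), (bdot_sym (S p) q d z). ring.
Qed.

Section EinCones.

Variables p q : nat.
Hypotheses (p_ge2 : (2 <= p)%nat) (q_ge2 : (2 <= q)%nat).
Let N := (p + q + 1)%nat.

(* Three linear forms on a three-dimensional block of either sign have a common nonnegative
   direction; this is where [p, q >= 2] is used. *)
Lemma Ein_cone_direction a b c r : exists d,
  supp N d /\ Bform p q d d <> 0 /\ Bform p q d d * r <= 0 /\
  0 <= bdot 0 N a d /\ 0 <= bdot 0 N b d /\ 0 <= bdot 0 N c d.
Proof.
  unfold N. destruct (Rlt_dec r 0) as [Hr|Hr].
  - destruct (nonneg_direction3 (a 0%nat) (a 1%nat) (a 2%nat) (b 0%nat) (b 1%nat) (b 2%nat)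
      (c 0%nat) (c 1%nat) (c 2%nat)) as [x0 [x1 [x2 [Hx [Ha [Hb Hc]]]]]].
    exists (vec3 0 x0 x1 x2).
    rewrite Bform_blocks, !bdot_split, !(bdot_vec3_in 0 p), !(bdot_vec3_out (S p) q 0) by lia.
    cbn. split; [apply supp_vec3; lia|]. repeat split; nra.
  - destruct (nonneg_direction3 (a (S p)) (a (S (S p))) (a (S (S (S p))))
      (b (S p)) (b (S (S p))) (b (S (S (S p)))) (c (S p)) (c (S (S p))) (c (S (S (S p)))))
      as [x0 [x1 [x2 [Hx [Ha [Hb Hc]]]]]].
    exists (vec3 (S p) x0 x1 x2).
    rewrite Bform_blocks, !bdot_split, !(bdot_vec3_in (S p) q), !(bdot_vec3_out 0 p (S p)) by lia.
    unfold vec3; rewrite !Nat.eqb_refl, ?(proj2 (Nat.eqb_neq _ _)) by lia.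
    split; [apply supp_vec3; lia|]. repeat split; nra.
Qed.

Lemma Ein_meets_cones : meets_cones N (Ein_tilde p q).
Proof.
  intros a b c [z [Ha [Hb Hc]]].
  set (z' := trunc N z).
  assert (Hz' : forall u, bdot 0 N u z' = bdot 0 N u z) by (intros; apply bdot_trunc_r).
  destruct (Ein_cone_direction a b c (Bform p q z' z')) as [d [Hd [Hdd [Hsign [Da [Db Dc]]]]]].
  destruct (quadratic_root_nonneg (Bform p q d d) (Bform p q z' d) (Bform p q z' z') Hdd Hsign)
    as [t [Ht Et]].
  set (w := vadd z' (vscal t d)).
  assert (Hw : forall u, bdot 0 N u z > 0 -> 0 <= bdot 0 N u d -> bdot 0 N u w > 0).
  { intros u Hu Hud. unfold w. rewrite bdot_addr, bdot_scalr, Hz'. nra. }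
  assert (Hww : 0 < bdot 0 N w w) by (apply (bdot_self_gt0 0 N a); pose proof (Hw a Ha Da); lra).
  assert (Hsw : supp N w) by (apply supp_vadd; [apply supp_trunc|apply supp_vscal, Hd]).
  destruct (normalize_vector N w Hsw Hww) as [s [Hs [Hsupp Hnorm]]].
  exists (vscal s w). rewrite !bdot_scalr. split.
  - split; [exact Hsupp|split; [|exact Hnorm]].
    rewrite Bform_blocks, !bdot_scall, !bdot_scalr, <- Rmult_minus_distr_l,
      <- Rmult_minus_distr_l, <- Bform_blocks.
    unfold w; rewrite Bform_expand, Et. ring.
  - pose proof (Hw a Ha Da); pose proof (Hw b Hb Db); pose proof (Hw c Hc Dc).
    repeat split; apply Rmult_gt_0_compat; lra.
Qed.

End EinCones.

(** * Paths and connectedness *)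

Lemma rel_open_halfset N C u : rel_open N C (halfset N C u).
Proof.
  split; [intros x [Cx _]; exact Cx|]. intros a [Ca Ha].
  set (beta := bdot 0 N u a) in Ha.
  pose proof (bdot_ge0 0 N u) as Hu.
  exists (beta * beta / (bdot 0 N u u + 1)). split.
  - apply Rdiv_lt_0_compat; nra.
  - intros b Cb Hd. split; [exact Cb|]. change (dot N) with (bdot 0 N) in Hd.
    pose proof (bdot_cauchy_schwarz 0 N u (vsub a b)) as Hcs. rewrite bdot_subr in Hcs.
    pose proof (bdot_ge0 0 N (vsub a b)).
    assert (bdot 0 N u u * bdot 0 N (vsub a b) (vsub a b) < beta * beta).
    { apply Rmult_lt_reg_r with (bdot 0 N u u + 1); [lra|].
      apply Rmult_lt_compat_r with (r := bdot 0 N u u + 1) in Hd; [|lra].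
      unfold Rdiv in Hd; rewrite Rmult_assoc, Rinv_l, Rmult_1_r in Hd by lra. nra. }
    fold beta in Hcs. nra.
Qed.

Definition separation (N : nat) (C U V : pset) : Prop :=
  rel_open N C U /\ rel_open N C V /\
  (forall x, C x -> U x \/ V x) /\ (forall x, ~ (U x /\ V x)).

Lemma separation_sym N C U V : separation N C U V -> separation N C V U.
Proof.
  intros [HU [HV [Hcov Hdis]]]. split; [exact HV|split; [exact HU|split]].
  - intros x Cx; destruct (Hcov x Cx); tauto.
  - intros x [Hv Hu]; exact (Hdis x (conj Hu Hv)).
Qed.

Definition path_continuous (N : nat) (g : R -> vecR) : Prop :=
  forall t, 0 <= t <= 1 -> forall eps, eps > 0 -> exists del, del > 0 /\
    forall s, 0 <= s <= 1 -> Rabs (s - t) < del ->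
      dot N (vsub (g t) (g s)) (vsub (g t) (g s)) < eps.

Definition joined (N : nat) (C : pset) (a b : vecR) : Prop :=
  exists g : R -> vecR, g 0 = a /\ g 1 = b /\
    (forall t, 0 <= t <= 1 -> C (g t)) /\ path_continuous N g.

(* The usual supremum argument: [sup {t | g([0,t]) ⊆ U}] is 1 and is attained. *)
Lemma separation_joined N C U V a b :
  separation N C U V -> joined N C a b -> U a -> U b.
Proof.
  intros [[_ HU] [[_ HV] [Hcov Hdis]]] [g [<- [<- [HC Hcont]]]] H0.
  set (E := fun t => 0 <= t <= 1 /\ forall s, 0 <= s <= t -> U (g s)).
  assert (HE0 : E 0) by (split; [lra|]; intros s Hs; replace s with 0 by lra; exact H0).
  destruct (completeness E) as [tau [Hub Hlub]]; [exists 1; intros t [Ht _]; lra|now exists 0|].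
  assert (Htau : 0 <= tau <= 1) by (split; [apply Hub, HE0|apply Hlub; intros t [Ht _]; lra]).
  assert (Below : forall s, 0 <= s < tau -> U (g s)).
  { intros s Hs. apply NNPP; intros Hn.
    enough (tau <= s) by lra. apply Hlub. intros t [Ht Hall].
    destruct (Rle_dec t s) as [|Hts]; [assumption|]. exfalso; apply Hn, Hall; lra. }
  assert (Utau : U (g tau)).
  { destruct (Hcov (g tau) (HC tau Htau)) as [|Hv]; [assumption|exfalso].
    destruct (HV _ Hv) as [eps [Heps Hball]].
    destruct (Hcont tau Htau eps Heps) as [del [Hdel Hnear]].
    assert (Hpos : 0 < tau).
    { destruct (Rle_lt_or_eq_dec 0 tau (proj1 Htau)) as [|<-]; [assumption|].
      exfalso; exact (Hdis (g 0) (conj H0 Hv)). }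
    set (s := Rmax 0 (tau - del / 2)).
    assert (Hs : 0 <= s < tau) by (unfold s, Rmax; destruct (Rle_dec 0 (tau - del / 2)); lra).
    apply (Hdis (g s)). split; [apply Below, Hs|].
    apply Hball; [apply HC; lra|]. apply Hnear; [lra|].
    unfold s, Rmax; destruct (Rle_dec 0 (tau - del / 2)); rewrite Rabs_left1; lra. }
  destruct (Rlt_dec tau 1) as [Hlt|Hge]; [exfalso|replace 1 with tau by lra; exact Utau].
  destruct (HU _ Utau) as [eps [Heps Hball]].
  destruct (Hcont tau Htau eps Heps) as [del [Hdel Hnear]].
  set (t' := Rmin (tau + del / 2) 1).
  assert (Ht' : tau < t' <= 1 /\ t' - tau < del)
    by (unfold t', Rmin; destruct (Rle_dec (tau + del / 2) 1); lra).
  enough (E t') by (pose proof (Hub t' H); lra).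
  split; [lra|]. intros s Hs.
  destruct (Rlt_dec s tau); [apply Below; lra|].
  apply Hball; [apply HC; lra|]. apply Hnear; [lra|]. rewrite Rabs_right; lra.
Qed.

Lemma separation_linked N C U V a b :
  separation N C U V -> clos_refl_trans vecR (joined N C) a b -> U a -> U b.
Proof.
  intros Hsep Hab. induction Hab as [a b Hj| |]; auto.
  exact (separation_joined N C U V a b Hsep Hj).
Qed.

Lemma connected_of_hub N C w0 :
  (forall w, C w -> clos_refl_trans vecR (joined N C) w w0) -> connected N C.
Proof.
  intros Hhub U V HU HV Hcov Hdis.
  assert (Hsep : separation N C U V) by (split; [|split; [|split]]; assumption).
  destruct (classic (exists u, U u)) as [[u Uu]|Hn]; [right|left; intros x Ux; apply Hn; eauto].
  intros v Vv. apply (Hdis w0). split.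
  - apply (separation_linked N C U V u); [exact Hsep| |exact Uu].
    apply Hhub. destruct HU as [HUC _]. exact (HUC u Uu).
  - apply (separation_linked N C V U v); [apply separation_sym, Hsep| |exact Vv].
    apply Hhub. destruct HV as [HVC _]. exact (HVC v Vv).
Qed.

Lemma conn_component_eq N S M H :
  conn_component N S M -> (forall w, M w -> H w) -> (forall w, H w -> S w) ->
  connected N H -> forall w, M w <-> H w.
Proof. intros [_ [_ [_ Hmax]]] HMH HHS HH w. split; [apply HMH|apply (Hmax H HMH HHS HH)]. Qed.

Lemma conn_component_halves N A u S M :
  (forall w, S w <-> A w /\ bdot 0 N u w <> 0) ->
  connected N (halfset N A u) -> connected N (halfset N A (vscal (-1) u)) ->
  conn_component N S M ->
  (forall w, M w <-> halfset N A u w) \/ (forall w, M w <-> halfset N A (vscal (-1) u) w).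
Proof.
  intros HS Hpos Hneg HM. pose proof HM as [_ [HMS [Mconn _]]].
  assert (Hsplit : forall w, M w -> halfset N M u w \/ halfset N M (vscal (-1) u) w).
  { intros w Mw. destruct (HS w) as [[_ Hw] _]; [apply HMS, Mw|].
    unfold halfset; rewrite bdot_scall.
    destruct (Rtotal_order (bdot 0 N u w) 0) as [|[|]]; [right|contradiction|left];
      split; auto; lra. }
  destruct (Mconn (halfset N M u) (halfset N M (vscal (-1) u)) (rel_open_halfset N M u)
              (rel_open_halfset N M _) Hsplit) as [Hnu|Hnv].
  { intros w [[_ Hw] [_ Hw']]. rewrite bdot_scall in Hw'. lra. }
  - right. apply (conn_component_eq N S); try assumption.
    + intros w Mw. destruct (Hsplit w Mw) as [Hu|[_ Hv]]; [exfalso; exact (Hnu w Hu)|].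
      split; [apply HS, HMS, Mw|exact Hv].
    + intros w [Aw Hw]. apply HS. rewrite bdot_scall in Hw. split; [exact Aw|lra].
  - left. apply (conn_component_eq N S); try assumption.
    + intros w Mw. destruct (Hsplit w Mw) as [[_ Hu]|Hv]; [|exfalso; exact (Hnv w Hv)].
      split; [apply HS, HMS, Mw|exact Hu].
    + intros w [Aw Hw]. apply HS. split; [exact Aw|lra].
Qed.

(** * Great-circle arcs *)

(* [2 |(1 - t) P + t Q|^2] when [|P|^2 = |Q|^2 = 1/2] and [s = 2 <P, Q>]. *)
Definition arc_den (s t : R) : R := (1 - t) * (1 - t) + t * t + 2 * t * (1 - t) * s.

Lemma arc_den_pos s t : -1 < s -> 0 <= t <= 1 -> 0 < arc_den s t.
Proof.
  intros Hs Ht.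
  replace (arc_den s t) with ((1 - 2 * t) * (1 - 2 * t) + 2 * (t * (1 - t)) * (1 + s))
    by (unfold arc_den; ring).
  assert (0 <= t * (1 - t)) by nra.
  destruct (Req_dec t (1/2)) as [->|Hne]; [nra|].
  assert (0 < (1 - 2 * t) * (1 - 2 * t)) by (apply Rsqr_pos_lt; lra). nra.
Qed.

Lemma arc_ineq s t : -1 < s -> s <= 1 -> 0 <= t <= 1 ->
  s * sqrt (arc_den s t) <= (1 - t) * s + t.
Proof.
  intros H1 H2 Ht. pose proof (arc_den_pos s t H1 Ht) as HD.
  pose proof (sqrt_pos (arc_den s t)) as Hr. pose proof (sqrt_sqrt _ (Rlt_le _ _ HD)) as Hrr.
  set (r := sqrt (arc_den s t)) in *. unfold arc_den in Hrr.
  assert (Hid : ((1 - t) * s + t) * ((1 - t) * s + t) - (s * r) * (s * r)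
                = t * (1 - s * s) * (2 * (1 - t) * s + t)).
  { replace ((s * r) * (s * r)) with (s * s * (r * r)) by ring. rewrite Hrr. ring. }
  assert (0 <= t * (1 - s * s)) by (apply Rmult_le_pos; nra).
  destruct (Rle_dec 0 ((1 - t) * s + t)) as [Hn|Hn].
  - destruct (Rle_dec s 0); [nra|].
    assert (0 <= t * (1 - s * s) * (2 * (1 - t) * s + t)) by (apply Rmult_le_pos; nra).
    nra.
  - assert (t * (1 - s * s) * (2 * (1 - t) * s + t) <= 0).
    { assert (2 * (1 - t) * s + t <= 0) by nra. nra. }
    nra.
Qed.

Lemma continuity_pt_near f t : continuity_pt f t ->
  forall eps, eps > 0 ->
    exists del, del > 0 /\ forall s, Rabs (s - t) < del -> Rabs (f t - f s) < eps.
Proof.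
  intros Hc eps Heps. destruct (Hc eps Heps) as [del [Hdel H]].
  exists del. split; [exact Hdel|]. intros s Hs.
  destruct (Req_dec s t) as [->|Hne]; [rewrite Rminus_diag, Rabs_R0; lra|].
  rewrite Rabs_minus_sym. apply (H s). split; [split; [exact I|auto]|exact Hs].
Qed.

Lemma bdot_lincomb_le m n a b P Q :
  bdot m n (vadd (vscal a P) (vscal b Q)) (vadd (vscal a P) (vscal b Q))
  <= 2 * (a * a) * bdot m n P P + 2 * (b * b) * bdot m n Q Q.
Proof.
  pose proof (bdot_ge0 m n (vadd (vscal a P) (vscal (- b) Q))) as H.
  rewrite bdot_addl, !bdot_addr, !bdot_scall, !bdot_scalr, (bdot_sym m n Q P) in *. nra.
Qed.

Lemma path_continuous_lincomb N f1 f2 P Q F :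
  (forall t, 0 <= t <= 1 -> continuity_pt f1 t) -> (forall t, 0 <= t <= 1 -> continuity_pt f2 t) ->
  path_continuous N (fun t => vadd (vadd (vscal (f1 t) P) (vscal (f2 t) Q)) F).
Proof.
  intros C1 C2 t Ht eps Heps.
  set (K := bdot 0 N P P + bdot 0 N Q Q).
  pose proof (bdot_ge0 0 N P); pose proof (bdot_ge0 0 N Q).
  assert (HK : 0 <= K) by (unfold K; lra).
  set (eta := sqrt (eps / (2 * K + 1))).
  assert (Heta : 0 < eta) by (apply sqrt_lt_R0, Rdiv_lt_0_compat; lra).
  assert (Heta2 : eta * eta = eps / (2 * K + 1))
    by (apply sqrt_sqrt; apply Rlt_le, Rdiv_lt_0_compat; lra).
  destruct (continuity_pt_near f1 t (C1 t Ht) eta Heta) as [d1 [Hd1 Hd1']].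
  destruct (continuity_pt_near f2 t (C2 t Ht) eta Heta) as [d2 [Hd2 Hd2']].
  exists (Rmin d1 d2). split; [apply Rmin_pos; assumption|]. intros s _ Hs.
  assert (Hsq : forall x, Rabs x < eta -> x * x < eps / (2 * K + 1)).
  { intros x Hx. rewrite <- Heta2. unfold Rabs in Hx; destruct (Rcase_abs x); nra. }
  assert (Ha := Hsq _ (Hd1' s (Rlt_le_trans _ _ _ Hs (Rmin_l _ _)))).
  assert (Hb := Hsq _ (Hd2' s (Rlt_le_trans _ _ _ Hs (Rmin_r _ _)))).
  replace (vsub _ _) with (vadd (vscal (f1 t - f1 s) P) (vscal (f2 t - f2 s) Q))
    by (apply functional_extensionality; intros i; unfold vsub, vadd, vscal; ring).
  change (dot N) with (bdot 0 N). eapply Rle_lt_trans; [apply bdot_lincomb_le|].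
  assert (HeK : eps / (2 * K + 1) * (2 * K) < eps).
  { replace (eps / (2 * K + 1) * (2 * K)) with (eps - eps / (2 * K + 1)) by (field; lra).
    pose proof (Rdiv_lt_0_compat eps (2 * K + 1) Heps ltac:(lra)). lra. }
  unfold K in *.
  pose proof (Rmult_le_compat_r _ _ _ H (Rlt_le _ _ Ha)).
  pose proof (Rmult_le_compat_r _ _ _ H0 (Rlt_le _ _ Hb)). lra.
Qed.

Lemma continuity_pt_arc_coef f s t :
  continuity_pt f t -> -1 < s -> 0 <= t <= 1 ->
  continuity_pt (fun t => f t / sqrt (arc_den s t)) t.
Proof.
  intros Cf Hs Ht. pose proof (arc_den_pos s t Hs Ht) as HD.
  apply continuity_pt_div; [exact Cf| |].
  - apply (continuity_pt_comp (arc_den s) sqrt); [unfold arc_den; reg|].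
    apply continuity_pt_sqrt; lra.
  - apply Rgt_not_eq, sqrt_lt_R0, HD.
Qed.

(* The chord from [P] to [Q] rescaled onto the sphere [|.|^2 = 1/2]: a great-circle arc. *)
Definition arc (m n : nat) (P Q : vecR) (t : R) : vecR :=
  vadd (vscal ((1 - t) / sqrt (arc_den (2 * bdot m n P Q) t)) P)
       (vscal (t / sqrt (arc_den (2 * bdot m n P Q) t)) Q).

Lemma arc_0 m n P Q : arc m n P Q 0 = P.
Proof.
  apply functional_extensionality; intros i. unfold arc, arc_den, vadd, vscal.
  replace ((1 - 0) * (1 - 0) + 0 * 0 + 2 * 0 * (1 - 0) * (2 * bdot m n P Q)) with 1 by ring.
  rewrite sqrt_1. field.
Qed.

Lemma arc_1 m n P Q : arc m n P Q 1 = Q.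
Proof.
  apply functional_extensionality; intros i. unfold arc, arc_den, vadd, vscal.
  replace ((1 - 1) * (1 - 1) + 1 * 1 + 2 * 1 * (1 - 1) * (2 * bdot m n P Q)) with 1 by ring.
  rewrite sqrt_1. field.
Qed.

Section Arc.

Variables (m n : nat) (P Q : vecR).
Hypotheses (HP : bdot m n P P = 1/2) (HQ : bdot m n Q Q = 1/2) (HPQ : -1 < 2 * bdot m n P Q).

Lemma arc_cos_le1 : 2 * bdot m n P Q <= 1.
Proof. pose proof (bdot_cauchy_schwarz m n P Q). rewrite HP, HQ in H. nra. Qed.

Lemma bdot_arc_arc t : 0 <= t <= 1 -> bdot m n (arc m n P Q t) (arc m n P Q t) = 1/2.
Proof.
  intros Ht. pose proof (arc_den_pos _ t HPQ Ht) as HD.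
  pose proof (sqrt_lt_R0 _ HD) as Hr. pose proof (sqrt_sqrt _ (Rlt_le _ _ HD)) as Hrr.
  unfold arc. set (D := arc_den (2 * bdot m n P Q) t) in *.
  rewrite bdot_addl, !bdot_addr, !bdot_scall, !bdot_scalr, HP, HQ, (bdot_sym m n Q P).
  transitivity (D / (2 * (sqrt D * sqrt D))).
  - set (r := sqrt D) in *. clearbody r. unfold D, arc_den. field. lra.
  - rewrite Hrr. field. lra.
Qed.

Lemma bdot_arc_ge t : 0 <= t <= 1 -> bdot m n Q P <= bdot m n Q (arc m n P Q t).
Proof.
  intros Ht. pose proof (arc_den_pos _ t HPQ Ht) as HD.
  pose proof (sqrt_lt_R0 _ HD) as Hr.
  pose proof (arc_ineq _ t HPQ arc_cos_le1 Ht) as Hineq.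
  unfold arc. rewrite bdot_addr, !bdot_scalr, HQ, (bdot_sym m n Q P).
  set (r := sqrt (arc_den (2 * bdot m n P Q) t)) in *.
  apply Rmult_le_reg_r with (2 * r); [lra|].
  replace (((1 - t) / r * bdot m n P Q + t / r * (1 / 2)) * (2 * r))
    with ((1 - t) * (2 * bdot m n P Q) + t) by (field; lra).
  lra.
Qed.

Lemma path_continuous_arc N F : path_continuous N (fun t => vadd (arc m n P Q t) F).
Proof.
  apply path_continuous_lincomb; intros t Ht;
    apply continuity_pt_arc_coef; try assumption; reg.
Qed.

End Arc.

(** * The halves of the complement of a light-cone hyperplane are connected *)

Definition block (m n : nat) (w : vecR) : vecR :=
  fun i => if andb (m <=? i)%nat (i <=? m + n)%nat then w i else 0.

Lemma bdot_block m n v G : bdot m n (block m n v) G = bdot m n v G.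
Proof.
  apply sum_eq; intros i Hi; unfold block.
  destruct (Nat.leb_spec m (m + i)), (Nat.leb_spec (m + i) (m + n)); simpl; lia || reflexivity.
Qed.

Lemma bdot_block_disjoint m n m' n' v G :
  (m + n < m' \/ m' + n' < m)%nat -> bdot m' n' (block m n v) G = 0.
Proof.
  intros H; apply sum_eq_R0; intros i Hi; unfold block.
  destruct (Nat.leb_spec m (m' + i)), (Nat.leb_spec (m' + i) (m + n)); simpl; lia || ring.
Qed.

Lemma supp_block N m n v : supp N v -> supp N (block m n v).
Proof. intros H i Hi; unfold block; destruct (andb _ _); [apply H, Hi|reflexivity]. Qed.

Lemma block_split p q w : supp (p + q + 1) w -> vadd (block 0 p w) (block (S p) q w) = w.
Proof.
  intros H; apply functional_extensionality; intros i; unfold vadd, block.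
  destruct (Nat.leb_spec 0 i), (Nat.leb_spec i (0 + p)), (Nat.leb_spec (S p) i),
    (Nat.leb_spec i (S p + q)); simpl; try lia; try ring.
  rewrite H by lia; ring.
Qed.

Lemma Ein_tilde_blocks p q w :
  Ein_tilde p q w <-> supp (p + q + 1) w /\ bdot 0 p w w = 1/2 /\ bdot (S p) q w w = 1/2.
Proof.
  unfold Ein_tilde. change (dot (p + q + 1) w w) with (bdot 0 (p + q + 1) w w).
  rewrite bdot_split, Bform_blocks. split; intros [Hs H]; split; [exact Hs|lra|exact Hs|lra].
Qed.

(* The two coordinate blocks of [R^{p+1,q+1}] in either order: [(mb, nb)] is the block a point
   is moved in, [(mo, no)] the one kept fixed. *)
Definition block_pair (p q mb nb mo no : nat) : Prop :=
  (mb = 0 /\ nb = p /\ mo = S p /\ no = q \/ mb = S p /\ nb = q /\ mo = 0 /\ no = p)%nat.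

Section BlockPair.

Variables p q mb nb mo no : nat.
Hypothesis Hpair : block_pair p q mb nb mo no.

Lemma block_pair_Ein w :
  Ein_tilde p q w <-> supp (p + q + 1) w /\ bdot mb nb w w = 1/2 /\ bdot mo no w w = 1/2.
Proof.
  rewrite Ein_tilde_blocks.
  destruct Hpair as [[-> [-> [-> ->]]]|[-> [-> [-> ->]]]]; tauto.
Qed.

Lemma block_pair_split v w : bdot 0 (p + q + 1) v w = bdot mb nb v w + bdot mo no v w.
Proof.
  rewrite bdot_split. destruct Hpair as [[-> [-> [-> ->]]]|[-> [-> [-> ->]]]]; ring.
Qed.

Lemma block_pair_disjoint v G : bdot mo no (block mb nb v) G = 0.
Proof.
  apply bdot_block_disjoint. destruct Hpair as [[-> [-> [-> ->]]]|[-> [-> [-> ->]]]]; lia.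
Qed.

Lemma block_pair_iso v :
  Bform p q v v = 0 -> bdot mb nb v v = bdot 0 p v v /\ bdot mo no v v = bdot 0 p v v.
Proof.
  rewrite Bform_blocks. destruct Hpair as [[-> [-> [-> ->]]]|[-> [-> [-> ->]]]]; lra.
Qed.

Lemma block_pair_split_vadd v x y :
  (forall G, bdot mo no x G = 0) -> (forall G, bdot mb nb y G = 0) ->
  bdot 0 (p + q + 1) v (vadd x y) = bdot mb nb v x + bdot mo no v y.
Proof.
  intros Hx Hy. rewrite block_pair_split, !bdot_addr, (bdot_sym mb nb v y), Hy,
    (bdot_sym mo no v x), Hx. ring.
Qed.

Lemma block_pair_Ein_vadd x y :
  supp (p + q + 1) x -> supp (p + q + 1) y ->
  (forall G, bdot mo no x G = 0) -> (forall G, bdot mb nb y G = 0) ->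
  bdot mb nb x x = 1/2 -> bdot mo no y y = 1/2 -> Ein_tilde p q (vadd x y).
Proof.
  intros Sx Sy Hx Hy Nx Ny. apply block_pair_Ein. split; [apply supp_vadd; assumption|split].
  - rewrite bdot_addl, !bdot_addr, (bdot_sym mb nb x y), !Hy, Nx. ring.
  - rewrite bdot_addl, !bdot_addr, (bdot_sym mo no y x), !Hx, Ny. ring.
Qed.

End BlockPair.

Section EinHalf.

Variables (p q : nat) (u : vecR).
Hypotheses (supp_u : supp (p + q + 1) u) (nonzero_u : Defs.nonzero (p + q + 1) u)
  (iso_u : Bform p q u u = 0).

Let N := (p + q + 1)%nat.
Let R0 := bdot 0 p u u.
Let kappa := / sqrt (2 * R0).
Let H := halfset N (Ein_tilde p q) u.

Lemma block_norm_pos : 0 < R0.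
Proof.
  pose proof (bdot_nonzero_pos _ _ nonzero_u) as Hpos.
  rewrite bdot_split in Hpos. rewrite Bform_blocks in iso_u. unfold R0. lra.
Qed.

Lemma halfset_scale_pos : 0 < kappa.
Proof. apply Rinv_0_lt_compat, sqrt_lt_R0. pose proof block_norm_pos. lra. Qed.

Lemma halfset_scale_sq : kappa * kappa * (2 * R0) = 1.
Proof.
  pose proof block_norm_pos. unfold kappa.
  rewrite <- Rinv_mult, sqrt_sqrt by lra. field. lra.
Qed.

(* [x] is not antipodal to [kappa * block mb nb u], so the arc between them is defined. *)
Lemma block_move_cos mb nb mo no x y :
  block_pair p q mb nb mo no ->
  (forall G, bdot mo no x G = 0) -> (forall G, bdot mb nb y G = 0) ->
  bdot mo no y y = 1/2 -> H (vadd x y) -> -1 < 2 * kappa * bdot mb nb u x.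
Proof.
  intros Hpair Xo Yb Ny [_ Hxy].
  pose proof block_norm_pos; pose proof halfset_scale_pos; pose proof halfset_scale_sq.
  destruct (block_pair_iso p q mb nb mo no Hpair u iso_u) as [_ Uo]. fold R0 in Uo.
  unfold N in Hxy; rewrite (block_pair_split_vadd p q mb nb mo no Hpair) in Hxy by assumption.
  assert (Hbe : bdot mo no u y <= kappa * R0).
  { pose proof (bdot_cauchy_schwarz mo no u y) as Hcs. rewrite Uo, Ny in Hcs.
    destruct (Rle_dec (bdot mo no u y) 0); [nra|]. apply Rsqr_incr_0_var; unfold Rsqr; nra. }
  nra.
Qed.

Lemma joined_block_move mb nb mo no x y :
  block_pair p q mb nb mo no ->
  supp N x -> supp N y -> (forall G, bdot mo no x G = 0) -> (forall G, bdot mb nb y G = 0) ->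
  bdot mb nb x x = 1/2 -> bdot mo no y y = 1/2 -> H (vadd x y) ->
  joined N H (vadd x y) (vadd (vscal kappa (block mb nb u)) y).
Proof.
  intros Hpair Sx Sy Xo Yb Nx Ny Hxy.
  pose proof halfset_scale_pos as Hk. pose proof halfset_scale_sq as Hk2.
  destruct (block_pair_iso p q mb nb mo no Hpair u iso_u) as [Ub _]. fold R0 in Ub.
  set (Q := vscal kappa (block mb nb u)).
  assert (HQb : forall G, bdot mb nb Q G = kappa * bdot mb nb u G)
    by (intros G; unfold Q; rewrite bdot_scall, bdot_block; reflexivity).
  assert (HQo : forall G, bdot mo no Q G = 0)
    by (intros G; unfold Q; rewrite bdot_scall, (block_pair_disjoint p q mb nb mo no Hpair); ring).
  assert (HQQ : bdot mb nb Q Q = 1/2) by (rewrite HQb, bdot_sym, HQb, Ub; lra).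
  assert (Hcos : -1 < 2 * bdot mb nb x Q).
  { rewrite bdot_sym, HQb, <- Rmult_assoc.
    exact (block_move_cos mb nb mo no x y Hpair Xo Yb Ny Hxy). }
  exists (fun t => vadd (arc mb nb x Q t) y).
  split; [rewrite arc_0; reflexivity|]. split; [rewrite arc_1; reflexivity|].
  split; [|apply path_continuous_arc, Hcos].
  intros t Ht. set (A := arc mb nb x Q t).
  assert (Ao : forall G, bdot mo no A G = 0)
    by (intros G; unfold A, arc; rewrite bdot_addl, !bdot_scall, Xo, HQo; ring).
  split.
  - apply (block_pair_Ein_vadd p q mb nb mo no Hpair); try assumption.
    + unfold A, arc. apply supp_vadd; apply supp_vscal; [exact Sx|].
      apply supp_vscal, supp_block, supp_u.
    + apply bdot_arc_arc; assumption.
  - pose proof (bdot_arc_ge mb nb x Q Nx HQQ Hcos t Ht) as Hge. fold A in Hge.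
    rewrite !HQb in Hge. apply Rmult_le_reg_l in Hge; [|exact Hk].
    destruct Hxy as [_ Hxy]. unfold N in *.
    rewrite (block_pair_split_vadd p q mb nb mo no Hpair) in * by assumption.
    lra.
Qed.

Lemma Ein_halfset_linked w : H w -> clos_refl_trans vecR (joined N H) w (vscal kappa u).
Proof.
  intros Hw. pose proof Hw as [Ew _]. apply Ein_tilde_blocks in Ew as [Sw [Nw1 Nw2]].
  assert (P1 : block_pair p q 0 p (S p) q) by (left; auto).
  assert (P2 : block_pair p q (S p) q 0 p) by (right; auto).
  set (x := block 0 p w). set (y := block (S p) q w).
  set (x' := vscal kappa (block 0 p u)).
  assert (Hnorm : forall m n v, bdot m n (block m n v) (block m n v) = bdot m n v v)
    by (intros; rewrite bdot_block, bdot_sym, bdot_block; reflexivity).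
  assert (Hstep1 : joined N H (vadd x y) (vadd x' y)).
  { apply (joined_block_move 0 p (S p) q); try assumption.
    - apply supp_block, Sw.
    - apply supp_block, Sw.
    - apply (block_pair_disjoint p q 0 p (S p) q P1).
    - apply (block_pair_disjoint p q (S p) q 0 p P2).
    - unfold x; rewrite Hnorm; exact Nw1.
    - unfold y; rewrite Hnorm; exact Nw2.
    - unfold x, y; rewrite block_split; assumption. }
  assert (Hstep2 : joined N H (vadd y x') (vadd (vscal kappa (block (S p) q u)) x')).
  { apply (joined_block_move (S p) q 0 p); try assumption.
    - apply supp_block, Sw.
    - apply supp_vscal, supp_block, supp_u.
    - apply (block_pair_disjoint p q (S p) q 0 p P2).
    - intros G; unfold x'; rewrite bdot_scall, (block_pair_disjoint p q 0 p (S p) q P1); ring.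
    - unfold y; rewrite Hnorm; exact Nw2.
    - unfold x'; rewrite bdot_scall, bdot_scalr, Hnorm.
      pose proof halfset_scale_sq. unfold R0 in *. lra.
    - rewrite vadd_comm. destruct Hstep1 as [g [_ [<- [Hg _]]]]. apply Hg; lra. }
  replace w with (vadd x y) by (apply block_split, Sw).
  replace (vscal kappa u) with (vadd (vscal kappa (block (S p) q u)) x').
  - apply rt_trans with (vadd x' y); [now apply rt_step|].
    rewrite vadd_comm. now apply rt_step.
  - unfold x'. rewrite <- (block_split p q u supp_u) at 3.
    apply functional_extensionality; intros i; unfold vadd, vscal; ring.
Qed.

Lemma Ein_halfset_connected : connected N H.
Proof. apply (connected_of_hub N H (vscal kappa u)), Ein_halfset_linked. Qed.

End EinHalf.

(** * Minkowski patches *)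

Definition Bdual (p : nat) (v : vecR) : vecR := fun i => if (i <=? p)%nat then v i else - v i.

Lemma Bdual_blocks p q v w :
  bdot 0 p (Bdual p v) w = bdot 0 p v w /\ bdot (S p) q (Bdual p v) w = - bdot (S p) q v w.
Proof.
  split.
  - apply sum_eq; intros i Hi; unfold Bdual; simpl; destruct (Nat.leb_spec i p); [reflexivity|lia].
  - rewrite <- (Rmult_1_l (bdot (S p) q v w)), Ropp_mult_distr_l, <- bdot_scall.
    apply sum_eq; intros i Hi; unfold Bdual, vscal; destruct (Nat.leb_spec (S p + i) p); [lia|ring].
Qed.

Lemma Bform_Bdual p q v w : Bform p q v w = bdot 0 (p + q + 1) (Bdual p v) w.
Proof.
  destruct (Bdual_blocks p q v w) as [H1 H2]. rewrite bdot_split, Bform_blocks, H1, H2. ring.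
Qed.

Lemma Bform_Bdual_self p q v : Bform p q (Bdual p v) (Bdual p v) = Bform p q v v.
Proof.
  rewrite !Bform_blocks. destruct (Bdual_blocks p q v (Bdual p v)) as [H1 H2].
  rewrite H1, H2, !(bdot_sym _ _ v). destruct (Bdual_blocks p q v v) as [H3 H4]. lra.
Qed.

Lemma supp_Bdual N p v : supp N v -> supp N (Bdual p v).
Proof. intros H i Hi; unfold Bdual; destruct (i <=? p)%nat; rewrite H by lia; ring. Qed.

Lemma nonzero_Bdual N p v : Defs.nonzero N v -> Defs.nonzero N (Bdual p v).
Proof.
  intros [i [Hi Hv]]. exists i. split; [exact Hi|]. unfold Bdual; destruct (i <=? p)%nat; lra.
Qed.

Lemma minkowski_patch_trace p q M :
  minkowski_patch p q M -> halfspace_trace (p + q + 1) (Ein_tilde p q) M.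
Proof.
  intros [v [Sv [Nv [Iv HM]]]].
  set (u := Bdual p v).
  assert (Su : supp (p + q + 1) u) by apply supp_Bdual, Sv.
  assert (Nu : Defs.nonzero (p + q + 1) u) by apply nonzero_Bdual, Nv.
  assert (Iu : Bform p q u u = 0) by (unfold u; rewrite Bform_Bdual_self; exact Iv).
  assert (Nu' : Defs.nonzero (p + q + 1) (vscal (-1) u)).
  { destruct Nu as [i [Hi Hui]]. exists i; split; [exact Hi|unfold vscal; lra]. }
  assert (Iu' : Bform p q (vscal (-1) u) (vscal (-1) u) = 0)
    by (rewrite !Bform_blocks, !bdot_scall, !bdot_scalr; rewrite Bform_blocks in Iu; lra).
  destruct (conn_component_halves (p + q + 1) (Ein_tilde p q) u
              (fun w => Ein_tilde p q w /\ Bform p q v w <> 0) M)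
    as [E|E]; [| | |exact HM|exists u; exact E|exists (vscal (-1) u); exact E].
  - intros w. rewrite Bform_Bdual. reflexivity.
  - apply Ein_halfset_connected; assumption.
  - apply Ein_halfset_connected; [apply supp_vscal| |]; assumption.
Qed.

Theorem lemma3p7 :
  (forall (n : nat) (H0 : pset) (I : Type) (H : I -> pset),
      hemisphere n H0 ->
      (forall i, hemisphere n (H i)) ->
      (forall i, exists x, H0 x /\ H i x) ->
      (forall i j, i <> j -> forall x, ~ (H0 x /\ H i x /\ H j x)) ->
      at_most_two I)
  /\
  (forall (p q : nat) (M0 : pset) (I : Type) (M : I -> pset),
      (2 <= p)%nat -> (2 <= q)%nat ->
      minkowski_patch p q M0 ->
      (forall i, minkowski_patch p q (M i)) ->
      (forall i, exists x, M0 x /\ M i x) ->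
      (forall i j, i <> j -> forall x, ~ (M0 x /\ M i x /\ M j x)) ->
      at_most_two I).
Proof.
  split.
  - intros n H0 I H H0h Hh. apply (at_most_two_halfspace_traces n (sphere n)).
    + apply sphere_meets_cones.
    + apply hemisphere_trace, H0h.
    + intros i; apply hemisphere_trace, Hh.
  - intros p q M0 I M Hp Hq M0p Mp.
    apply (at_most_two_halfspace_traces (p + q + 1) (Ein_tilde p q)).
    + apply Ein_meets_cones; assumption.
    + apply minkowski_patch_trace, M0p.
    + intros i; apply minkowski_patch_trace, Mp.
Qed.
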